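(* Let $\mathbb{K}$ be a field, $m\in\mathbb{Z}_{>0}$, $n=m$, and let $\mathbf{U}_1=\mathbf{U}_1(\mathfrak{gl}_m)$. Let $V$ be the $n$-dimensional vector representation of $\mathbf{U}_1$, $V^*$ its dual, and for $r,s\in\mathbb{Z}_{\geq 0}$ set $T_n^{r,s}=V^{\otimes r}\otimes (V^* )^{\otimes s}$. If $T_n^{r,s}$ is a non-semisimple $\mathbf{U}_1$-module, then $T_n^{r+1,s+1}$ is a non-semisimple $\mathbf{U}_1$-module.
   Context: $\mathbf{U}_1(\mathfrak{gl}_m)$ is the (Lusztig) quantized enveloping algebra of $\mathfrak{gl}_m$ specialized at $q=1$ over $\mathbb{K}$ (for any characteristic of $\mathbb{K}$); modules are finite-dimensional of type $1$, and tensor products carry the usual Hopf algebra action. *)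

From HB Require Import structures.
From mathcomp Require Import all_boot all_order all_algebra.
Set Implicit Arguments. Unset Strict Implicit. Unset Printing Implicit Defensive.
Import Order.TTheory GRing.Theory Num.Theory.
Local Open Scope ring_scope.

(* The mixed tensor space T_n^{r,s} = V^{(x)r} (x) (V^* )^{(x)s}, n = m,
   with basis v_{b 0} (x) ... (x) v_{b (r-1)} (x) v^*_{b r} (x) ... (x) v^*_{b (r+s-1)}
   indexed by functions b : 'I_(r+s) -> 'I_m. Factors p < r are copies of V,
   factors p >= r are copies of V^*. *)
Definition tix (m r s : nat) := {ffun 'I_(r + s) -> 'I_m}.
Definition dimT (m r s : nat) : nat := #|{: tix m r s}|.

(* Action of the generator E_{ij} (i <> j) of U_1(gl_m) on one tensor factor,
   in row-vector convention: coefficient of basis vector c in E_{ij} . a.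
   On V^*: E_{ij} acts through the antipode, S(E_{ij}) = -E_{ij} (q = 1),
   so E_{ij} v^*_a = - [a = i] v^*_j.
   On V and V^* the divided powers E_{ij}^{(a)}, a >= 2, act by 0. *)
Definition efac (K : fieldType) (m r s : nat) (p : 'I_(r + s)) (i j a c : 'I_m) : K :=
  if (p < r)%N then ((a == j) && (c == i))%:R
  else - ((a == i) && (c == j))%:R.

(* Action of the divided power E_{ij}^{(k)} on T^{r,s} via the iterated coproduct
   Delta(E^{(k)}) = sum_{a_1+...+a_N = k} E^{(a_1)} (x) ... (x) E^{(a_N)}. *)
Definition Ediv_coef (K : fieldType) (m r s : nat) (i j : 'I_m) (k : nat)
    (b c : tix m r s) : K :=
  \sum_(S : {set 'I_(r + s)} | #|S| == k)
     \prod_(p : 'I_(r + s))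
        (if p \in S then efac K p i j (b p) (c p) else (b p == c p)%:R).

Definition Ediv (K : fieldType) (m r s : nat) (i j : 'I_m) (k : nat)
    : 'M[K]_(dimT m r s) :=
  \matrix_(x, y) Ediv_coef K i j k (enum_val x) (enum_val y).

Definition wt (m r s : nat) (b : tix m r s) (i : 'I_m) : int :=
  (#|[set p : 'I_(r + s) | (p < r)%N && (b p == i)]|)%:Z
  - (#|[set p : 'I_(r + s) | (r <= p)%N && (b p == i)]|)%:Z.

Definition ibinom (z : int) (t : nat) : int :=
  match z with
  | Posz n => ('C(n, t))%:Z
  | Negz n => (-1) ^+ t * ('C(n + t, t))%:Z   (* Negz n = -(n+1) *)
  end.

(* Action of the Cartan generator  (H_i choose t)  (i.e. [K_i;0 choose t] at q=1),
   diagonal on weight vectors. (K_i acts trivially on type-1 modules at q = 1.) *)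
Definition Hbin (K : fieldType) (m r s : nat) (i : 'I_m) (t : nat)
    : 'M[K]_(dimT m r s) :=
  \matrix_(x, y) (if x == y then (ibinom (wt (enum_val x) i) t)%:~R else 0).

(* U is (the row space of) a U_1(gl_m)-submodule of T^{r,s}: stable under all
   generators E_{ij}^{(k)} (i <> j, which includes the E_alpha^{(k)}, F_alpha^{(k)})
   and (H_i choose t). *)
Definition is_submod (K : fieldType) (m r s : nat) (U : 'M[K]_(dimT m r s)) : Prop :=
  (forall (i j : 'I_m) (k : nat), i != j -> (U *m Ediv K r s i j k <= U)%MS)
  /\ (forall (i : 'I_m) (t : nat), (U *m Hbin K r s i t <= U)%MS).

Definition Tsemisimple (K : fieldType) (m r s : nat) : Prop :=
  forall U : 'M[K]_(dimT m r s), is_submod U ->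
    exists W : 'M[K]_(dimT m r s),
      is_submod W /\ mxdirect (U + W) /\ (U + W == 1%:M)%MS.

From mathcomp Require Import all_boot all_order all_algebra.
From mathcomp Require Import zify ring.

(* Contracting the new copy of V against the new copy of V^* is a surjective
   U_1-module map T^{r+1,s+1} -> T^{r,s}: at q = 1 the divided powers act on a
   tensor product factor by factor, and the evaluation pairing V (x) V^* -> K is
   invariant.  A quotient of a semisimple module is semisimple (pull a submodule
   back, complement it upstairs, push the complement down), so semisimplicity
   of T^{r+1,s+1} would force that of T^{r,s}. *)
Set Implicit Arguments. Unset Strict Implicit. Unset Printing Implicit Defensive.
Import Order.TTheory GRing.Theory Num.Theory.
Local Open Scope ring_scope.

Lemma card_set_sum (T : finType) (P : pred T) : #|[set x | P x]| = (\sum_x P x)%N.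
Proof. by rewrite -sum1dep_card big_mkcond; apply: eq_bigr => x _; case: (P x). Qed.

Lemma sum_enum_val (K : fieldType) (m r s : nat) (F : tix m r s -> K) :
  \sum_(x < dimT m r s) F (enum_val x) = \sum_c F c.
Proof. by rewrite -(big_enum_val (A := {: tix m r s})); apply: eq_bigl. Qed.

Section SurjectiveIntertwiner.
Variables (K : fieldType) (m r' s' r s : nat).
Variable Psi : 'M[K]_(dimT m r' s', dimT m r s).
Hypothesis Psi_E : forall (i j : 'I_m) k,
  i != j -> Ediv K r' s' i j k *m Psi = Psi *m Ediv K r s i j k.
Hypothesis Psi_H : forall (i : 'I_m) t,
  Hbin K r' s' i t *m Psi = Psi *m Hbin K r s i t.

Lemma sub_preimage p (X : 'M[K]_(p, dimT m r' s')) (U : 'M[K]_(dimT m r s)) :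
  (X <= kermx (Psi *m cokermx U))%MS = (X *m Psi <= U)%MS.
Proof. by rewrite sub_kermx submxE mulmxA. Qed.

Lemma is_submod_preimage (U : 'M[K]_(dimT m r s)) :
  is_submod U -> is_submod (kermx (Psi *m cokermx U)).
Proof.
move=> [UE UH].
have U'Psi : (kermx (Psi *m cokermx U) *m Psi <= U)%MS by rewrite -sub_preimage.
split=> [i j k ij | i t]; rewrite sub_preimage -mulmxA ?Psi_E ?Psi_H // mulmxA.
  exact: submx_trans (submxMr _ U'Psi) (UE _ _ _ ij).
exact: submx_trans (submxMr _ U'Psi) (UH _ _).
Qed.

Lemma is_submod_image (W : 'M[K]_(dimT m r' s')) :
  is_submod W -> is_submod <<W *m Psi>>%MS.
Proof.
move=> [WE WH]; split=> [i j k ij | i t]; rewrite (eqmxMr _ (genmxE _)) genmxE.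
  by rewrite -mulmxA -Psi_E // mulmxA submxMr // WE.
by rewrite -mulmxA -Psi_H // mulmxA submxMr // WH.
Qed.

Lemma Tsemisimple_image :
  row_full Psi -> Tsemisimple K m r' s' -> Tsemisimple K m r s.
Proof.
move=> Psi_full ssT U subU.
set U' := kermx (Psi *m cokermx U).
have [W [subW [dirU'W fullU'W]]] := ssT U' (is_submod_preimage subU).
exists <<W *m Psi>>%MS; split; first exact: is_submod_image.
split.
  apply/mxdirect_addsP/eqP; rewrite -submx0.
  have /submxP[D defD] : (U :&: <<W *m Psi>> <= W *m Psi)%MS.
    by rewrite -(genmxE (W *m Psi)) capmxSr.
  have DW_U' : (D *m W <= U')%MS.
    by rewrite sub_preimage -mulmxA -defD capmxSl.
  have : (D *m W <= U' :&: W)%MS by rewrite sub_capmx DW_U' submxMl.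
  rewrite (mxdirect_addsP dirU'W) => /submx0null DW0.
  by rewrite defD mulmxA DW0 mul0mx.
rewrite submx1 (adds_eqmx (eqmx_refl U) (genmxE _)).
have /submxP[D ->] : (1%:M <= Psi)%MS by rewrite sub1mx.
have D_U'W : (D <= U' + W)%MS by rewrite (eqmxP fullU'W) submx1.
apply: submx_trans (submxMr Psi D_U'W) _.
by rewrite addsmxMr addsmxS // -sub_preimage.
Qed.

End SurjectiveIntertwiner.

Section FactorCoefficients.
Variables (K : fieldType) (m r s : nat) (i j : 'I_m).

Definition factor_coef (p : 'I_(r + s)) (acts : bool) (x y : 'I_m) : K :=
  if acts then efac K p i j x y else (x == y)%:R.

Lemma Ediv_coefE k (b c : tix m r s) :
  Ediv_coef K i j k b c =
  \sum_(S : {set 'I_(r + s)}) (#|S| == k)%:R * \prod_p factor_coef p (p \in S) (b p) (c p).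
Proof.
rewrite /Ediv_coef big_mkcond; apply: eq_bigr => S _.
by case: (#|S| == k); rewrite ?mul1r ?mul0r.
Qed.

(* The evaluation pairing V (x) V^* -> K is invariant: the terms in which
   exactly one of the two factors is acted upon cancel. *)
Lemma sum_factor_coef_pairing (p q : 'I_(r + s)) (n k : nat) (x y : 'I_m) :
  i != j -> (p < r)%N -> (r <= q)%N ->
  \sum_(a1 : bool) \sum_(a2 : bool)
     ((n + a1 + a2)%N == k)%:R * \sum_t factor_coef p a1 x t * factor_coef q a2 y t
  = (n == k)%:R * (x == y)%:R.
Proof.
move=> ij pV qVd; rewrite !big_bool /= !addn0.
have qVd' : (q < r)%N = false by rewrite ltnNge qVd.
have sum_at a (f : 'I_m -> K) : (forall t, t != a -> f t = 0) -> \sum_t f t = f a.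
  by move=> f0; rewrite (bigD1 a) //= big1 ?addr0.
have acts_both : \sum_t factor_coef p true x t * factor_coef q true y t = 0.
  apply: big1 => t _; rewrite /factor_coef /efac pV qVd'.
  by case: (eqVneq t i) => [->|_]; rewrite ?(negPf ij) !andbF ?oppr0 ?mulr0 ?mul0r.
have acts_V :
    \sum_t factor_coef p true x t * factor_coef q false y t = ((x == j) && (y == i))%:R.
  rewrite (sum_at i) => [|t ti]; rewrite /factor_coef /efac pV ?(negPf ti) ?andbF ?mul0r //.
  by rewrite eqxx andbT [y == i]eq_sym -natrM mulnb.
have acts_Vd :
    \sum_t factor_coef p false x t * factor_coef q true y t = - ((x == j) && (y == i))%:R.
  rewrite (sum_at j) => [|t tj];
    rewrite /factor_coef /efac qVd' ?(negPf tj) ?andbF ?oppr0 ?mulr0 //.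
  by rewrite eqxx andbT mulrN -natrM mulnb andbC.
have acts_none : \sum_t factor_coef p false x t * factor_coef q false y t = (x == y)%:R.
  rewrite (sum_at x) => [|t tx]; rewrite /factor_coef.
    by rewrite eqxx mul1r eq_sym.
  by rewrite eq_sym (negPf tx) mul0r.
rewrite acts_both acts_V acts_Vd acts_none; ring.
Qed.

End FactorCoefficients.

Section Positions.
Variables (r s : nat).

Definition posV : 'I_(r.+1 + s.+1) := Ordinal (ltn_addr s.+1 (ltnSn r)).
Lemma posVd_subproof : ((r + s).+1 < r.+1 + s.+1)%N. Proof. lia. Qed.
Definition posVd : 'I_(r.+1 + s.+1) := Ordinal posVd_subproof.

Lemma val_posV : nat_of_ord posV = r. Proof. by []. Qed.
Lemma val_posVd : nat_of_ord posVd = (r + s).+1. Proof. by []. Qed.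

Lemma oldpos_subproof (p : 'I_(r + s)) :
  ((if (p < r)%N then nat_of_ord p else p.+1) < r.+1 + s.+1)%N.
Proof. by case: ifP; have := ltn_ord p; lia. Qed.
Definition oldpos (p : 'I_(r + s)) : 'I_(r.+1 + s.+1) := Ordinal (oldpos_subproof p).

Lemma oldpos_inj : injective oldpos.
Proof.
move=> p q /(congr1 val) /= eq_pq; apply: val_inj => /=.
by move: eq_pq; do 2 case: ifP; lia.
Qed.

Lemma oldpos_neq_posV p : oldpos p != posV.
Proof. by apply/eqP => /(congr1 val) /=; case: ifP; lia. Qed.

Lemma oldpos_neq_posVd p : oldpos p != posVd.
Proof. by apply/eqP => /(congr1 val) /=; have := ltn_ord p; case: ifP; lia. Qed.

Lemma posV_neq_posVd : posV != posVd.
Proof. by apply/eqP => /(congr1 val) /=; lia. Qed.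

Lemma oldposP q : q != posV -> q != posVd -> exists p, oldpos p = q.
Proof.
move=> /eqP qV /eqP qVd.
have {}qV : nat_of_ord q <> r by move=> eq_qr; apply: qV; apply: val_inj.
have {}qVd : nat_of_ord q <> (r + s).+1 by move=> eq_q; apply: qVd; apply: val_inj.
have := ltn_ord q; case: (ltnP q r) => qr lt_q.
  by exists (Ordinal (ltn_addr s qr)); apply: val_inj; rewrite /= qr.
have lt_p : ((nat_of_ord q).-1 < r + s)%N by lia.
exists (Ordinal lt_p); apply: val_inj => /=.
have -> : ((nat_of_ord q).-1 < r)%N = false by lia.
lia.
Qed.

Lemma oldpos_is_V p : (oldpos p < r.+1)%N = (p < r)%N.
Proof. by rewrite /=; case: ifP; lia. Qed.

Lemma oldpos_is_Vd p : (r < oldpos p)%N = (r <= p)%N.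
Proof. by rewrite /=; case: ifP; lia. Qed.

Lemma posVd_is_Vd : (r.+1 <= posVd)%N.
Proof. by rewrite /=; lia. Qed.

Lemma big_oldpos (R : Type) (idx : R) (op : Monoid.com_law idx)
    (F : 'I_(r.+1 + s.+1) -> R) :
  \big[op/idx]_q F q = op (F posV) (op (F posVd) (\big[op/idx]_p F (oldpos p))).
Proof.
rewrite (bigD1 posV) // (bigD1 posVd) /=; last by rewrite eq_sym posV_neq_posVd.
rewrite -(big_imset _ (in2W oldpos_inj)) /=; congr (op _ (op _ _)).
apply: eq_bigl => q; apply/andP/imsetP => [[qV qVd] | [p _ ->]].
  by have [p <-] := oldposP qV qVd; exists p.
by rewrite oldpos_neq_posV oldpos_neq_posVd.
Qed.

Lemma efac_oldpos (K : fieldType) m p (i j a c : 'I_m) :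
  efac K (oldpos p) i j a c = efac K p i j a c.
Proof. by rewrite /efac oldpos_is_V. Qed.

Definition extset (S : {set 'I_(r + s)}) (inV inVd : bool) : {set 'I_(r.+1 + s.+1)} :=
  oldpos @: S :|: (if inV then [set posV] else set0) :|: (if inVd then [set posVd] else set0).

Lemma mem_extset_oldpos S inV inVd p : (oldpos p \in extset S inV inVd) = (p \in S).
Proof.
by rewrite !inE (mem_imset _ _ oldpos_inj); case: inV; case: inVd;
  rewrite ?inE ?(negPf (oldpos_neq_posV p)) ?(negPf (oldpos_neq_posVd p)) ?orbF.
Qed.

Lemma mem_extset_posV S inV inVd : (posV \in extset S inV inVd) = inV.
Proof.
rewrite !inE; have /negPf-> : posV \notin oldpos @: S.
  by apply/imsetP => -[p _ /eqP]; rewrite eq_sym (negPf (oldpos_neq_posV p)).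
by case: inV; case: inVd; rewrite ?inE ?eqxx ?(negPf posV_neq_posVd).
Qed.

Lemma mem_extset_posVd S inV inVd : (posVd \in extset S inV inVd) = inVd.
Proof.
rewrite !inE; have /negPf-> : posVd \notin oldpos @: S.
  by apply/imsetP => -[p _ /eqP]; rewrite eq_sym (negPf (oldpos_neq_posVd p)).
by case: inV; case: inVd; rewrite ?inE ?eqxx 1?eq_sym ?(negPf posV_neq_posVd).
Qed.

Lemma card_extset S inV inVd : #|extset S inV inVd| = (#|S| + inV + inVd)%N.
Proof.
rewrite -!sum1_card big_mkcond /= big_oldpos mem_extset_posV mem_extset_posVd.
under eq_bigr do rewrite mem_extset_oldpos.
rewrite -big_mkcond /=; move: (\sum_(_ in S) 1)%N => n.
by case: inV; case: inVd => /=; lia.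
Qed.

Lemma sum_extset (R : nmodType) (F : {set 'I_(r.+1 + s.+1)} -> R) :
  \sum_S F S = \sum_S0 \sum_(inV : bool) \sum_(inVd : bool) F (extset S0 inV inVd).
Proof.
pose split_set (S : {set 'I_(r.+1 + s.+1)}) := (oldpos @^-1: S, posV \in S, posVd \in S).
have extsetK : cancel (fun x => extset x.1.1 x.1.2 x.2) split_set.
  move=> [[S0 inV] inVd]; rewrite /split_set mem_extset_posV mem_extset_posVd.
  by congr (_, _, _); apply/setP => p; rewrite inE mem_extset_oldpos.
have split_setK : cancel split_set (fun x => extset x.1.1 x.1.2 x.2).
  move=> S; apply/setP => q /=.
  case: (eqVneq q posV) => [->|qV]; first by rewrite mem_extset_posV.
  case: (eqVneq q posVd) => [->|qVd]; first by rewrite mem_extset_posVd.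
  by have [p <-] := oldposP qV qVd; rewrite mem_extset_oldpos inE.
rewrite (reindex (fun x => extset x.1.1 x.1.2 x.2)) /=; last first.
  by apply: onW_bij; exists split_set.
transitivity (\sum_(y : {set 'I_(r + s)} * bool) \sum_(inVd : bool) F (extset y.1 y.2 inVd)).
  by rewrite pair_big; apply: eq_big => // -[[]].
by rewrite [RHS]pair_big; apply: eq_big => // -[].
Qed.

End Positions.

Arguments posV {r s}.
Arguments posVd {r s}.

Section Contraction.
Variables (K : fieldType) (m r s : nat).

Definition restr (c : tix m r.+1 s.+1) : tix m r s := [ffun p => c (oldpos p)].

Definition extend (c : tix m r s) (t : 'I_m) : tix m r.+1 s.+1 :=
  [ffun q => if [pick p | oldpos p == q] is Some p then c p else t].

Lemma extend_oldpos c t p : extend c t (oldpos p) = c p.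
Proof.
by rewrite ffunE; case: pickP => [p' /eqP/oldpos_inj -> // | /(_ p)]; rewrite eqxx.
Qed.

Lemma extend_posV c t : extend c t posV = t.
Proof.
rewrite ffunE; case: pickP => [p /eqP eq_p | //].
by have := oldpos_neq_posV p; rewrite eq_p eqxx.
Qed.

Lemma extend_posVd c t : extend c t posVd = t.
Proof.
rewrite ffunE; case: pickP => [p /eqP eq_p | //].
by have := oldpos_neq_posVd p; rewrite eq_p eqxx.
Qed.

Lemma restr_extend c t : restr (extend c t) = c.
Proof. by apply/ffunP => p; rewrite ffunE extend_oldpos. Qed.

Definition contraction_coef (c : tix m r.+1 s.+1) (c' : tix m r s) : K :=
  ((c posV == c posVd) && (restr c == c'))%:R.

Definition contraction : 'M[K]_(dimT m r.+1 s.+1, dimT m r s) :=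
  \matrix_(x, y) contraction_coef (enum_val x) (enum_val y).

Lemma sum_contraction_coefl (G : tix m r.+1 s.+1 -> K) c' :
  \sum_c G c * contraction_coef c c' = \sum_t G (extend c' t).
Proof.
rewrite (partition_big (fun c : tix m r.+1 s.+1 => c posV) predT) //=.
apply: eq_bigr => t _; rewrite (bigD1 (extend c' t)) ?extend_posV //=.
rewrite /contraction_coef extend_posV extend_posVd restr_extend !eqxx mulr1.
rewrite big1 ?addr0 // => c /andP[/eqP cV ne_c].
case: (c posV =P c posVd) => [cVVd|]; last by rewrite mulr0.
case: (restr c =P c') => [restr_c | _]; last by rewrite mulr0.
case/eqP: ne_c; apply/ffunP => q.
case: (eqVneq q posV) => [-> | qV]; first by rewrite extend_posV.
case: (eqVneq q posVd) => [-> | qVd]; first by rewrite extend_posVd -cVVd.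
by have [p <-] := oldposP qV qVd; rewrite extend_oldpos -restr_c ffunE.
Qed.

Lemma sum_contraction_coefr (b : tix m r.+1 s.+1) (F : tix m r s -> K) :
  \sum_c' contraction_coef b c' * F c' = (b posV == b posVd)%:R * F (restr b).
Proof.
rewrite (bigD1 (restr b)) //= big1 ?addr0 => [|c' ne_c'].
  by rewrite /contraction_coef eqxx andbT.
by rewrite /contraction_coef [restr b == _]eq_sym (negPf ne_c') andbF mul0r.
Qed.

Lemma contraction_Ediv_coef (i j : 'I_m) k (b : tix m r.+1 s.+1) (c' : tix m r s) :
  i != j ->
  \sum_c Ediv_coef K i j k b c * contraction_coef c c' =
  (b posV == b posVd)%:R * Ediv_coef K i j k (restr b) c'.
Proof.
move=> ij.
pose P0 (S0 : {set 'I_(r + s)}) :=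
  \prod_p factor_coef K i j p (p \in S0) (b (oldpos p)) (c' p).
transitivity (\sum_S0 P0 S0 * \sum_(inV : bool) \sum_(inVd : bool)
    ((#|S0| + inV + inVd)%N == k)%:R *
    \sum_t factor_coef K i j (@posV r s) inV (b posV) t *
            factor_coef K i j (@posVd r s) inVd (b posVd) t).
  rewrite sum_contraction_coefl; under eq_bigr do rewrite Ediv_coefE.
  rewrite exchange_big sum_extset; apply: eq_bigr => S0 _.
  rewrite mulr_sumr; apply: eq_bigr => inV _; rewrite mulr_sumr; apply: eq_bigr => inVd _.
  rewrite !mulr_sumr; apply: eq_bigr => t _.
  rewrite card_extset big_oldpos mem_extset_posV mem_extset_posVd extend_posV extend_posVd.
  rewrite /P0; under eq_bigr do
    rewrite mem_extset_oldpos extend_oldpos /factor_coef efac_oldpos.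
  by rewrite /factor_coef /=; ring.
under eq_bigr do rewrite sum_factor_coef_pairing ?posVd_is_Vd //.
rewrite Ediv_coefE mulr_sumr; apply: eq_bigr => S0 _.
under [in RHS]eq_bigr do rewrite ffunE.
by rewrite /P0; ring.
Qed.

Lemma contraction_Ediv (i j : 'I_m) k : i != j ->
  Ediv K r.+1 s.+1 i j k *m contraction = contraction *m Ediv K r s i j k.
Proof.
move=> ij; apply/matrixP => x y; rewrite !mxE.
under eq_bigr do rewrite !mxE; under [RHS]eq_bigr do rewrite !mxE.
rewrite (sum_enum_val (fun c =>
  Ediv_coef K i j k (enum_val x) c * contraction_coef c (enum_val y))).
rewrite (sum_enum_val (fun c =>
  contraction_coef (enum_val x) c * Ediv_coef K i j k c (enum_val y))).
by rewrite contraction_Ediv_coef // sum_contraction_coefr.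
Qed.

Lemma wt_restr (b : tix m r.+1 s.+1) (i : 'I_m) :
  b posV = b posVd -> wt (restr b) i = wt b i.
Proof.
move=> bVVd; rewrite /wt !card_set_sum [in RHS]big_oldpos [in RHS]big_oldpos.
under [in RHS]eq_bigr do rewrite oldpos_is_V.
under [in X in _ = _ - X]eq_bigr do rewrite oldpos_is_Vd.
under [in LHS]eq_bigr do rewrite ffunE.
under [in X in _ - X = _]eq_bigr do rewrite ffunE.
rewrite val_posV val_posVd ltnSn ltnn -bVVd /=.
move: (\sum_(_ < r + s) _)%N (\sum_(_ < r + s) _)%N (b posV == i) => nV nVd c.
by case: c => /=; lia.
Qed.

Lemma contraction_Hbin (i : 'I_m) t :
  Hbin K r.+1 s.+1 i t *m contraction = contraction *m Hbin K r s i t.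
Proof.
apply/matrixP => x y; rewrite !mxE (bigD1 x) // [RHS](bigD1 y) //= !big1 ?addr0.
- rewrite !mxE !eqxx /contraction_coef.
  case: (enum_val x posV =P enum_val x posVd) => [xVVd | _]; last by rewrite mulr0 mul0r.
  case: (restr (enum_val x) =P enum_val y) => [<- | _]; last by rewrite mulr0 mul0r.
  by rewrite wt_restr // mulr1 mul1r.
- by move=> z /negPf zy; rewrite !mxE zy mulr0.
- by move=> z /negPf zx; rewrite !mxE eq_sym zx mul0r.
Qed.

Lemma row_full_contraction : (0 < m)%N -> row_full contraction.
Proof.
move=> m_gt0; pose t0 : 'I_m := Ordinal m_gt0.
rewrite -sub1mx; apply/submxP.
exists (\matrix_(x, y) (enum_val y == extend (enum_val x) t0)%:R).
apply/matrixP => x y; rewrite !mxE.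
under eq_bigr do rewrite !mxE.
rewrite (sum_enum_val (fun c =>
  (c == extend (enum_val x) t0)%:R * contraction_coef c (enum_val y))).
rewrite (bigD1 (extend (enum_val x) t0)) //= big1 ?addr0 => [|c /negPf->];
  last by rewrite mul0r.
rewrite eqxx mul1r /contraction_coef extend_posV extend_posVd restr_extend eqxx.
by rewrite (inj_eq enum_val_inj).
Qed.

End Contraction.

Theorem proposition6p2 (K : fieldType) (m r s : nat) :
  (0 < m)%N ->
  ~ Tsemisimple K m r s ->
  ~ Tsemisimple K m r.+1 s.+1.
Proof.
move=> m_gt0 not_ssT ssT; apply: not_ssT.
exact: Tsemisimple_image (@contraction_Ediv K m r s) (@contraction_Hbin K m r s)
  (row_full_contraction K r s m_gt0) ssT.
Qed.
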